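(* Let $C\subseteq[n]$ be a nonempty proper subset and let $\ket{\psi}=\ket{a}_C\otimes\ket{b}_{\overline{C}}$ be an $n$-qubit state, where $\ket{a}_C$ and $\ket{b}_{\overline{C}}$ are each $\epsilon$-far from every multipartite product state. Suppose we are given two copies of $\ket{\psi}$ and run the SWAP test on a nonempty proper subset $S\subseteq[n]$ of the qubits. If $S=C$ or $S=\overline{C}$, the SWAP test always accepts. If $S\ne C,\overline{C}$, the SWAP test accepts with probability at most $1-\epsilon^2/2$.
   Context: A state on a set $Q$ of qubits is multipartite product if it equals $\ket{a'}_D\otimes\ket{b'}_{Q\setminus D}$ for some nonempty proper $D\subsetneq Q$; a pure state $\ket{\phi}$ is $\epsilon$-far from a set $\mathcal{P}$ if $|\langle\phi|\chi\rangle|^2\le1-\epsilon^2$ for all $\ket{\chi}\in\mathcal{P}$. The SWAP test on the qubits $S$ of two copies $\ket{\psi}\otimes\ket{\psi}$: append an ancilla qubit in $\ket{+}$, apply, controlled on the ancilla, the unitary that swaps the qubits in $S$ of the first copy with the corresponding qubits of the second copy, apply a Hadamard to the ancilla, measure it in the standard basis and accept on outcome $0$. Equivalently it measures the projector $\frac12(I+\mathrm{SWAP}_S)$, with acceptance probability $\frac12+\frac12\mathrm{Tr}(\psi_S^2)$. *)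

From HB Require Import structures.
From mathcomp Require Import all_boot all_order all_algebra.
Set Implicit Arguments. Unset Strict Implicit. Unset Printing Implicit Defensive.
Import Order.TTheory GRing.Theory Num.Theory.
Local Open Scope ring_scope.

(* Qubits of an n-qubit system are indexed by 'I_n.  A subset Q of qubits is a
   {set 'I_n}; the computational basis of the qubits in Q is indexed by
   [conf Q] = bit assignments to the elements of Q.  A (pure, unnormalised)
   vector on Q with amplitudes in K is a {ffun conf Q -> K}. *)
Notation conf Q := {ffun {i | i \in Q} -> bool}.

Definition full n (Q : {set 'I_n}) (x : conf Q) : 'I_n -> bool :=
  fun i => odflt false (omap x (insub i : option {j | j \in Q})).

Definition restr n (D : {set 'I_n}) (f : 'I_n -> bool) : conf D :=
  [ffun j => f (val j)].

(* tensor product |a>_D (x) |b>_E, viewed as a vector on Q (used with E = Q \ D) *)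
Definition tens (K : numClosedFieldType) n (Q D E : {set 'I_n})
  (a : {ffun conf D -> K}) (b : {ffun conf E -> K}) : {ffun conf Q -> K} :=
  [ffun x => a (restr D (full x)) * b (restr E (full x))].

Definition dotq (K : numClosedFieldType) n (Q : {set 'I_n})
  (u v : {ffun conf Q -> K}) : K := \sum_x (u x)^* * v x.

Definition is_state (K : numClosedFieldType) n (Q : {set 'I_n})
  (u : {ffun conf Q -> K}) : Prop := dotq u u = 1.

Definition mproduct (K : numClosedFieldType) n (Q : {set 'I_n})
  (chi : {ffun conf Q -> K}) : Prop :=
  exists D : {set 'I_n}, [/\ D != set0, D \proper Q &
    exists (a : {ffun conf D -> K}) (b : {ffun conf (Q :\: D) -> K}),
      [/\ is_state a, is_state b & chi = tens Q a b]].

Definition eps_far (K : numClosedFieldType) n (Q : {set 'I_n})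
  (phi : {ffun conf Q -> K}) (eps : K) : Prop :=
  forall chi, is_state chi -> mproduct chi -> `|dotq phi chi| ^+ 2 <= 1 - eps ^+ 2.

(* SWAP of the qubits in S between two copies: basis |x,y> |-> |sw x y, sw y x> *)
Definition sw n (Q S : {set 'I_n}) (x y : conf Q) : conf Q :=
  [ffun j => if val j \in S then y j else x j].

(* acceptance probability of the SWAP test on S applied to |psi> (x) |psi>:
   <Psi| (I + SWAP_S)/2 |Psi> with Psi = psi (x) psi *)
Definition swap_accept (K : numClosedFieldType) n (S : {set 'I_n})
  (psi : {ffun conf [set: 'I_n] -> K}) : K :=
  2^-1 * \sum_x \sum_y (psi x * psi y)^* *
         (psi x * psi y + psi (sw S x y) * psi (sw S y x)).

(* The acceptance probability of the SWAP test on S is (1 + Tr rho_S^2) / 2,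
   and for psi = a (x) b the purity Tr rho_S^2 factors as the product of the
   purities of a on C /\ S and of b on ~C /\ S.  A factor equals 1 when S
   contains none or all of the qubits of its part, which gives the first claim.
   Otherwise S cuts, say, C.  An averaging argument over the Gram matrix of the
   columns of a (viewed as a matrix across C /\ S | C \ S) shows that the
   purity of a is at most its squared overlap with some product state, hence
   at most 1 - eps^2; the factor for b is at most 1 by Cauchy-Schwarz. *)

From HB Require Import structures.
From mathcomp Require Import all_boot all_order all_algebra.
From mathcomp Require Import ring.
Set Implicit Arguments. Unset Strict Implicit. Unset Printing Implicit Defensive.
Import Order.TTheory GRing.Theory Num.Theory.
Local Open Scope ring_scope.

Local Notation part D x := (restr D (full x)).

Section Configurations.
Variable n : nat.
Implicit Types Q D E S : {set 'I_n}.

Lemma full_in Q (x : conf Q) i (Qi : i \in Q) : full x i = x (exist _ i Qi).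
Proof. by rewrite /full (insubT (fun j => j \in Q) Qi). Qed.

Lemma full_out Q (x : conf Q) i : i \notin Q -> full x i = false.
Proof. by move/negbTE=> Qi; rewrite /full insubF. Qed.

Lemma full_restr Q (f : 'I_n -> bool) i : full (restr Q f) i = (i \in Q) && f i.
Proof.
have [Qi | /full_out-> //] := boolP (i \in Q).
by rewrite (full_in _ Qi) ffunE.
Qed.

Lemma restr_full Q (x : conf Q) : restr Q (full x) = x.
Proof. by apply/ffunP=> -[i Qi]; rewrite ffunE /= (full_in x Qi). Qed.

Lemma eq_restr D (f g : 'I_n -> bool) : {in D, f =1 g} -> restr D f = restr D g.
Proof. by move=> fg; apply/ffunP=> -[i Di]; rewrite !ffunE /= fg. Qed.

Lemma full_inj Q (x y : conf Q) : {in Q, full x =1 full y} -> x = y.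
Proof. by move=> xy; rewrite -(restr_full x) -(restr_full y); apply: eq_restr. Qed.

Lemma full_sw Q S (x y : conf Q) i :
  full (sw S x y) i = if i \in S then full y i else full x i.
Proof.
have [Qi | Qi] := boolP (i \in Q); first by rewrite !(full_in _ Qi) ffunE.
by rewrite !full_out //; case: ifP.
Qed.

Lemma part_sw D Q S (x y : conf Q) :
  part D (sw S x y) = sw S (part D x) (part D y).
Proof. by apply/ffunP=> j; rewrite !ffunE full_sw. Qed.

Definition glue Q D E (s : conf D) (t : conf E) : conf Q :=
  restr Q (fun i => if i \in D then full s i else full t i).

Variables (Q D E : {set 'I_n}).
Hypotheses (DUE : D :|: E = Q) (disjDE : [disjoint D & E]).

Let inQ i : (i \in Q) = (i \in D) || (i \in E).
Proof. by rewrite -DUE inE. Qed.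

Lemma part_glue_l (s : conf D) (t : conf E) : part D (glue Q s t) = s.
Proof.
rewrite -[RHS]restr_full; apply: eq_restr => i Di.
by rewrite full_restr inQ Di.
Qed.

Lemma part_glue_r (s : conf D) (t : conf E) : part E (glue Q s t) = t.
Proof.
rewrite -[RHS]restr_full; apply: eq_restr => i Ei.
by rewrite full_restr inQ Ei orbT (disjointFl disjDE Ei).
Qed.

Lemma glue_part (x : conf Q) : glue Q (part D x) (part E x) = x.
Proof.
apply: full_inj => i Qi; rewrite !full_restr Qi /=.
by case: ifP => [-> // | Dn]; move: Qi; rewrite inQ Dn => /= ->.
Qed.

Lemma big_conf_split (V : nmodType) (F : conf D -> conf E -> V) :
  \sum_(x : conf Q) F (part D x) (part E x) = \sum_s \sum_t F s t.
Proof.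
rewrite pair_big (reindex (fun p : conf D * conf E => glue Q p.1 p.2)) /=.
  by apply: eq_bigr => -[s t] _ /=; rewrite part_glue_l part_glue_r.
exists (fun x => (part D x, part E x)) => [[s t] _ | x _] /=.
  by rewrite part_glue_l part_glue_r.
exact: glue_part.
Qed.

Lemma big_conf_split2 (V : nmodType)
    (F : conf D -> conf E -> conf D -> conf E -> V) :
  \sum_(x : conf Q) \sum_(y : conf Q) F (part D x) (part E x) (part D y) (part E y) =
  \sum_s \sum_t \sum_s' \sum_t' F s t s' t'.
Proof.
under eq_bigr => x _ do rewrite (big_conf_split (F (part D x) (part E x))).
exact: (big_conf_split (fun s t => \sum_s' \sum_t' F s t s' t')).
Qed.

Lemma dotq_tens (K : numClosedFieldType) (u u' : {ffun conf D -> K})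
    (v v' : {ffun conf E -> K}) :
  dotq (tens Q u v) (tens Q u' v') = dotq u u' * dotq v v'.
Proof.
rewrite /dotq; under eq_bigr do rewrite !ffunE.
rewrite (big_conf_split (fun s t => (u s * v t)^* * (u' s * v' t))) big_distrl.
apply: eq_bigr => s _; rewrite big_distrr; apply: eq_bigr => t _ /=.
by rewrite rmorphM; ring.
Qed.

End Configurations.

Lemma setUDS (T : finType) (D Q : {set T}) : D \subset Q -> D :|: (Q :\: D) = Q.
Proof.
move=> /subsetP DQ; apply/setP=> i; rewrite !inE.
by case Di: (i \in D) => //=; rewrite DQ.
Qed.

Lemma disjointSD (T : finType) (D Q : {set T}) : [disjoint D & Q :\: D].
Proof. by rewrite -setI_eq0; apply/eqP/setP=> i; rewrite !inE; case: (i \in D). Qed.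

Section InnerProduct.
Variables (K : numClosedFieldType) (n : nat).
Implicit Types Q D E : {set 'I_n}.

Definition scalev Q (c : K) (u : {ffun conf Q -> K}) : {ffun conf Q -> K} :=
  [ffun x => c * u x].

Definition normalize Q (u : {ffun conf Q -> K}) := scalev (sqrtC (dotq u u))^-1 u.

Lemma dotq_conj Q (u v : {ffun conf Q -> K}) : (dotq u v)^* = dotq v u.
Proof.
rewrite /dotq rmorph_sum; apply: eq_bigr => x _.
by rewrite rmorphM /= conjCK mulrC.
Qed.

Lemma dotq_ge0 Q (u : {ffun conf Q -> K}) : 0 <= dotq u u.
Proof. by apply: sumr_ge0 => x _; rewrite -normCKC exprn_ge0. Qed.

Lemma dotq_eq0 Q (u : {ffun conf Q -> K}) : (dotq u u == 0) = (u == 0).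
Proof.
apply/eqP/eqP=> [uu0 | ->]; last by rewrite /dotq big1 // => x _; rewrite ffunE mulr0.
apply/ffunP=> x; apply/eqP; rewrite ffunE -normr_eq0 -sqrf_eq0 normCKC.
by apply/eqP; apply: (psumr_eq0P _ uu0) => // y _; rewrite -normCKC exprn_ge0.
Qed.

Lemma mul_dotq Q1 Q2 (u u' : {ffun conf Q1 -> K}) (v v' : {ffun conf Q2 -> K}) :
  dotq u u' * dotq v v' = \sum_x \sum_y (u x * v y)^* * (u' x * v' y).
Proof.
rewrite /dotq big_distrl; apply: eq_bigr => x _; rewrite big_distrr.
by apply: eq_bigr => y _ /=; rewrite rmorphM; ring.
Qed.

Lemma dotq_scalevl Q (c : K) (u v : {ffun conf Q -> K}) :
  dotq (scalev c u) v = c^* * dotq u v.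
Proof.
rewrite /dotq big_distrr; apply: eq_bigr => x _ /=.
by rewrite ffunE rmorphM mulrA.
Qed.

Lemma dotq_scalevr Q (c : K) (u v : {ffun conf Q -> K}) :
  dotq u (scalev c v) = c * dotq u v.
Proof.
rewrite /dotq big_distrr; apply: eq_bigr => x _ /=.
by rewrite ffunE mulrCA.
Qed.

Lemma normalize_state Q (u : {ffun conf Q -> K}) :
  0 < dotq u u -> is_state (normalize u).
Proof.
move=> uu_gt0; have r_gt0 : 0 < sqrtC (dotq u u) by rewrite sqrtC_gt0.
rewrite /is_state dotq_scalevl dotq_scalevr mulrA fmorphV /= geC0_conj ?ltW //.
by rewrite -invfM -expr2 sqrtCK mulVf ?gt_eqF.
Qed.

Lemma tens_scalev Q D E (c d : K) (u : {ffun conf D -> K}) (v : {ffun conf E -> K}) :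
  tens Q (scalev c u) (scalev d v) = scalev (c * d) (tens Q u v).
Proof. by apply/ffunP=> x; rewrite !ffunE; ring. Qed.

Lemma dotq_CauchySchwarz Q (u v : {ffun conf Q -> K}) :
  `|dotq u v| ^+ 2 <= dotq u u * dotq v v.
Proof.
pose A x y := (u x * v y)^* * (u x * v y).
pose B x y := (u x * v y)^* * (v x * u y).
have lagrange x y : `|u x * v y - u y * v x| ^+ 2 = A x y + A y x - (B x y + B y x).
  by rewrite normCKC rmorphB !rmorphM /A /B !rmorphM; ring.
have symmetrize (F : conf Q -> conf Q -> K) :
    \sum_x \sum_y (F x y + F y x) = (\sum_x \sum_y F x y) *+ 2.
  by under eq_bigr do rewrite big_split; rewrite big_split /= [X in _ + X]exchange_big.
have : 0 <= \sum_x \sum_y (A x y + A y x - (B x y + B y x)).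
  by apply: sumr_ge0 => x _; apply: sumr_ge0 => y _; rewrite -lagrange exprn_ge0.
under eq_bigr do rewrite sumrB.
rewrite sumrB !symmetrize /A /B -!mul_dotq -mulrnBl pmulrn_lge0 // subr_ge0.
by rewrite normCK dotq_conj.
Qed.

End InnerProduct.

(* [purity S a] is <a (x) a| SWAP_S |a (x) a>, i.e. Tr(rho^2) for the reduced
   state rho of [a] on the qubits of Q in S (for a unit vector [a]). *)
Definition purity (K : numClosedFieldType) n (Q S : {set 'I_n})
    (a : {ffun conf Q -> K}) : K :=
  \sum_x \sum_y (a x * a y)^* * (a (sw S x y) * a (sw S y x)).

Section Purity.
Variables (K : numClosedFieldType) (n : nat).
Implicit Types Q D E S : {set 'I_n}.

Lemma swap_acceptE S (psi : {ffun conf [set: 'I_n] -> K}) :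
  swap_accept S psi = 2^-1 * (dotq psi psi ^+ 2 + purity S psi).
Proof.
rewrite /swap_accept /purity expr2 mul_dotq -big_split; congr (_ * _).
by apply: eq_bigr => x _; rewrite -big_split; apply: eq_bigr => y _; rewrite mulrDr.
Qed.

Lemma purity_disjoint Q S (a : {ffun conf Q -> K}) :
  [disjoint Q & S] -> purity S a = dotq a a ^+ 2.
Proof.
move=> QS; have swE (x y : conf Q) : sw S x y = x.
  by apply: full_inj => i Qi; rewrite full_sw (disjointFr QS Qi).
by rewrite /purity expr2 mul_dotq; under eq_bigr do under eq_bigr do rewrite !swE.
Qed.

Lemma purity_subset Q S (a : {ffun conf Q -> K}) :
  Q \subset S -> purity S a = dotq a a ^+ 2.
Proof.
move=> /subsetP QS; have swE (x y : conf Q) : sw S x y = y.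
  by apply: full_inj => i Qi; rewrite full_sw QS.
rewrite /purity expr2 mul_dotq.
by under eq_bigr => x _ do under eq_bigr => y _ do rewrite !swE (mulrC (a y)).
Qed.

Lemma purity_tens Q D E S (a : {ffun conf D -> K}) (b : {ffun conf E -> K}) :
  D :|: E = Q -> [disjoint D & E] ->
  purity S (tens Q a b) = purity S a * purity S b.
Proof.
move=> DUE disjDE; rewrite /purity /tens.
under eq_bigr do under eq_bigr do rewrite !ffunE !part_sw.
rewrite (big_conf_split2 DUE disjDE (fun s t s' t' =>
   (a s * b t * (a s' * b t'))^* *
   (a (sw S s s') * b (sw S t t') * (a (sw S s' s) * b (sw S t' t))))).
rewrite big_distrl; apply: eq_bigr => s _ /=.
rewrite exchange_big /= big_distrl; apply: eq_bigr => s' _ /=.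
rewrite big_distrr; apply: eq_bigr => t _ /=.
rewrite big_distrr; apply: eq_bigr => t' _ /=.
by rewrite !rmorphM; ring.
Qed.

End Purity.

Lemma exists_weighted_ge (R : numDomainType) (I : finType) (g w : I -> R) :
  (forall i, 0 <= g i) -> (forall i, 0 <= w i) -> (forall i, g i = 0 -> w i = 0) ->
  0 < \sum_i g i -> exists2 i, 0 < g i & (\sum_j w j) * g i <= (\sum_j g j) * w i.
Proof.
move=> g_ge0 w_ge0 gw0 sg_gt0.
pose d i := (\sum_j w j) * g i - (\sum_j g j) * w i.
have sum_d : \sum_i d i = 0 by rewrite sumrB -!mulr_sumr mulrC subrr.
have [i /andP[gi di] | no_i] := pickP [pred i | (0 < g i) && (d i <= 0)].
  by exists i; rewrite // -subr_le0.
have d_ge0 i : 0 <= d i.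
  move: (g_ge0 i); rewrite le0r => /orP[/eqP gi0 | gi_gt0].
    by rewrite /d gi0 gw0 // !mulr0 subrr.
  have d_real : d i \is Num.real by rewrite rpredB // rpredM // ger0_real // sumr_ge0.
  by move: (no_i i); rewrite /= gi_gt0 /= real_leNgt // => /negbFE /ltW.
have [|i1 /andP[_ gi1]] := @psumr_neq0P _ _ predT g (fun i _ => g_ge0 i).
  by apply/eqP; rewrite gt_eqF.
by move: (no_i i1); rewrite /= gi1 (psumr_eq0P (fun i _ => d_ge0 i) sum_d) ?lexx.
Qed.

Section Gram.
Variables (K : numClosedFieldType) (n : nat) (Q S : {set 'I_n}).
Variable a : {ffun conf Q -> K}.
Local Notation D := (Q :&: S).
Local Notation E := (Q :\: (Q :&: S)).

Let DUE : D :|: E = Q := setUDS (subsetIl Q S).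
Let disjDE : [disjoint D & E] := disjointSD D Q.

(* Viewing [a] as a matrix indexed by [conf D * conf E], [gram] is the Gram
   matrix of its columns, i.e. the transposed reduced state of [a] on [E]. *)
Definition column (t : conf E) : {ffun conf D -> K} := [ffun s => a (glue Q s t)].

Definition gram (t t' : conf E) : K := dotq (column t) (column t').

Lemma column_part x : a x = column (part E x) (part D x).
Proof. by rewrite ffunE glue_part. Qed.

Let partD_sw (x y : conf Q) : part D (sw S x y) = part D y.
Proof. by apply: eq_restr => i; rewrite !inE full_sw => /andP[_ ->]. Qed.

Let partE_sw (x y : conf Q) : part E (sw S x y) = part E x.
Proof.
by apply: eq_restr => i; rewrite !inE full_sw; case: (i \in S); case: (i \in Q).
Qed.

Lemma dotq_gram : dotq a a = \sum_t gram t t.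
Proof.
rewrite /dotq; under eq_bigr do rewrite column_part.
rewrite (big_conf_split DUE disjDE (fun s t => (column t s)^* * column t s)).
exact: exchange_big.
Qed.

Lemma purity_gram : purity S a = \sum_t \sum_t' gram t t' * gram t' t.
Proof.
rewrite /purity.
under eq_bigr do under eq_bigr do rewrite !column_part !partD_sw !partE_sw.
rewrite (big_conf_split2 DUE disjDE (fun s t s' t' =>
   (column t s * column t' s')^* * (column t s' * column t' s))).
under eq_bigr do under eq_bigr do rewrite exchange_big /=.
rewrite exchange_big /=; apply: eq_bigr => t _.
rewrite exchange_big /=; apply: eq_bigr => t' _.
rewrite /gram /dotq big_distrl; apply: eq_bigr => s _ /=.
rewrite big_distrr; apply: eq_bigr => s' _ /=.
by rewrite rmorphM; ring.
Qed.

Lemma gram_conj t t' : (gram t t')^* = gram t' t.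
Proof. exact: dotq_conj. Qed.

Lemma gram_mul_ge0 t t' : 0 <= gram t t' * gram t' t.
Proof. by rewrite -gram_conj -normCKC exprn_ge0. Qed.

Lemma purity_ge0 : 0 <= purity S a.
Proof.
rewrite purity_gram; apply: sumr_ge0 => t _.
by apply: sumr_ge0 => t' _; apply: gram_mul_ge0.
Qed.

Lemma dotq_column_tens t0 (v : {ffun conf E -> K}) :
  dotq a (tens Q (column t0) v) = \sum_t gram t t0 * v t.
Proof.
rewrite /dotq; under eq_bigr do rewrite ffunE column_part.
rewrite (big_conf_split DUE disjDE (fun s t => (column t s)^* * (column t0 s * v t))).
rewrite exchange_big; apply: eq_bigr => t _.
by rewrite /gram /dotq big_distrl; apply: eq_bigr => s _; rewrite mulrA.
Qed.

(* [purity S a] is the sum of the [w t = (gram^2) t t] and [dotq a a] the sum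
   of the [gram t t]; averaging yields [t0] with [purity * gram t0 t0 <=
   dotq a a * w t0], and [column t0] tensored with the conjugated [t0]-th
   column of [gram] has overlap exactly [w t0] with [a]. *)
Lemma purity_le_tens : 0 < dotq a a ->
  exists (u : {ffun conf D -> K}) (v : {ffun conf E -> K}),
    [/\ 0 < dotq u u, 0 < dotq v v &
        purity S a * (dotq u u * dotq v v) <= dotq a a * `|dotq a (tens Q u v)| ^+ 2].
Proof.
move=> aa_gt0; pose w t := \sum_t' gram t t' * gram t' t.
have w_ge0 t : 0 <= w t by apply: sumr_ge0 => t' _; apply: gram_mul_ge0.
have gram0 t : gram t t = 0 -> w t = 0.
  move=> /eqP; rewrite dotq_eq0 => /eqP col0; rewrite /w big1 // => t' _.
  by rewrite /gram col0 /dotq big1 ?mul0r // => s _; rewrite ffunE rmorph0 mul0r.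
have sg_gt0 : 0 < \sum_t gram t t by rewrite -dotq_gram.
have [t0 g_gt0 avg] :=
  exists_weighted_ge (fun t => dotq_ge0 (column t)) w_ge0 gram0 sg_gt0.
pose v := [ffun t => (gram t t0)^*].
have vv : dotq v v = w t0.
  by apply: eq_bigr => t _; rewrite ffunE conjCK gram_conj mulrC.
have overlap : dotq a (tens Q (column t0) v) = w t0.
  by rewrite dotq_column_tens; apply: eq_bigr => t _; rewrite ffunE gram_conj mulrC.
have w_gt0 : 0 < w t0.
  rewrite /w (bigD1 t0) //= ltr_wpDr ?mulr_gt0 //.
  by apply: sumr_ge0 => t' _; apply: gram_mul_ge0.
exists (column t0), v; split; rewrite ?vv //.
rewrite overlap (ger0_norm (ltW w_gt0)) purity_gram dotq_gram mulrA expr2 mulrA.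
by have := ler_wpM2r (ltW w_gt0) avg.
Qed.

End Gram.

Definition cuts n (S Q : {set 'I_n}) := ~~ [disjoint Q & S] && ~~ (Q \subset S).

Section Bounds.
Variables (K : numClosedFieldType) (n : nat).
Implicit Types Q D S : {set 'I_n}.

Lemma eps_far_tens Q D (a : {ffun conf Q -> K}) (eps : K)
    (u : {ffun conf D -> K}) (v : {ffun conf (Q :\: D) -> K}) :
  D != set0 -> D \proper Q -> eps_far a eps -> 0 < dotq u u -> 0 < dotq v v ->
  `|dotq a (tens Q u v)| ^+ 2 <= (1 - eps ^+ 2) * (dotq u u * dotq v v).
Proof.
move=> D0 DQ far uu_gt0 vv_gt0.
have DUE := setUDS (proper_sub DQ); have disjDE := disjointSD D Q.
have u_state := normalize_state uu_gt0; have v_state := normalize_state vv_gt0.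
have chi_state : is_state (tens Q (normalize u) (normalize v)).
  by rewrite /is_state (dotq_tens DUE disjDE) u_state v_state mulr1.
have chi_product : mproduct (tens Q (normalize u) (normalize v)).
  by exists D; split=> //; exists (normalize u), (normalize v).
have norm_scale : `|(sqrtC (dotq u u))^-1 * (sqrtC (dotq v v))^-1| ^+ 2 =
    (dotq u u * dotq v v)^-1.
  by rewrite normrM !normfV !ger0_norm ?sqrtC_ge0 ?ltW // exprMn !exprVn !sqrtCK invfM.
have := far _ chi_state chi_product.
rewrite /normalize tens_scalev dotq_scalevr normrM exprMn norm_scale mulrC.
by rewrite ler_pdivrMr ?mulr_gt0.
Qed.

Lemma purity_le Q S (a : {ffun conf Q -> K}) (c : K) :
  is_state a ->
  (forall (u : {ffun conf (Q :&: S) -> K}) (v : {ffun conf (Q :\: (Q :&: S)) -> K}),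
     0 < dotq u u -> 0 < dotq v v ->
     `|dotq a (tens Q u v)| ^+ 2 <= c * (dotq u u * dotq v v)) ->
  purity S a <= c.
Proof.
move=> aa overlap_le.
have [|u [v [uu_gt0 vv_gt0 le_overlap]]] := purity_le_tens S (a := a).
  by rewrite aa ltr01.
rewrite aa mul1r in le_overlap.
by rewrite -(ler_pM2r (mulr_gt0 uu_gt0 vv_gt0)) (le_trans le_overlap) ?overlap_le.
Qed.

Lemma purity_le1 Q S (a : {ffun conf Q -> K}) : is_state a -> purity S a <= 1.
Proof.
move=> aa; apply: purity_le => // u v _ _.
rewrite -aa -(dotq_tens (setUDS (subsetIl Q S)) (disjointSD _ Q)).
exact: dotq_CauchySchwarz.
Qed.

Lemma purity_le_far Q S (a : {ffun conf Q -> K}) (eps : K) :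
  cuts S Q -> is_state a -> eps_far a eps -> purity S a <= 1 - eps ^+ 2.
Proof.
move=> /andP[QS_meet QS_sub] aa far; apply: purity_le => // u v.
by apply: eps_far_tens => //; [rewrite setI_eq0 | apply: properIl].
Qed.

End Bounds.

Lemma cuts_or_cutsC n (C S : {set 'I_n}) :
  S != set0 -> S != [set: 'I_n] -> S != C -> S != ~: C -> cuts S C || cuts S (~: C).
Proof.
move=> S0 ST SC SC'; rewrite /cuts -!negb_or -negb_and; apply/negP=> /andP[hC hC'].
have trivI (X : {set 'I_n}) : [disjoint X & S] || (X \subset S) ->
    X :&: S = set0 \/ X :&: S = X.
  by case/orP=> [/disjoint_setI0 | /setIidPl]; [left | right].
have defS : S = (C :&: S) :|: (~: C :&: S) by rewrite -setIUl setUCr setTI.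
case: (trivI _ hC) (trivI _ hC') defS => [] -> [] -> defS.
- by rewrite defS setU0 eqxx in S0.
- by rewrite defS set0U eqxx in SC'.
- by rewrite defS setU0 eqxx in SC.
- by rewrite defS setUCr eqxx in ST.
Qed.

Theorem corollary2p18 (K : numClosedFieldType) (n : nat) (C : {set 'I_n})
  (a : {ffun conf C -> K}) (b : {ffun conf (~: C) -> K}) (eps : K)
  (S : {set 'I_n}) :
  eps \is Num.real ->
  C != set0 -> C != [set: 'I_n] ->
  is_state a -> is_state b ->
  eps_far a eps -> eps_far b eps ->
  S != set0 -> S != [set: 'I_n] ->
  let psi : {ffun conf [set: 'I_n] -> K} := tens [set: 'I_n] a b in
  ((S == C) || (S == ~: C) -> swap_accept S psi = 1) /\
  (S != C -> S != ~: C -> swap_accept S psi <= 1 - eps ^+ 2 / 2).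
Proof.
move=> _ _ _ sa sb fa fb S0 ST psi.
have CUC := setUCr C; have disjC : [disjoint C & ~: C] by rewrite disjoints_subset setCK.
have -> : swap_accept S psi = 2^-1 * (1 + purity S a * purity S b).
  rewrite swap_acceptE (dotq_tens CUC disjC) (purity_tens S a b CUC disjC).
  by rewrite sa sb mulr1 expr1n.
split.
  have half : 2^-1 * (1 + 1 * 1) = 1 :> K by rewrite mulr1 mulVf // pnatr_eq0.
  case/orP=> /eqP->.
    have disjCC : [disjoint ~: C & C] by rewrite disjoint_sym.
    by rewrite (purity_subset a (subxx C)) (purity_disjoint b disjCC) sa sb expr1n half.
  by rewrite (purity_disjoint a disjC) (purity_subset b (subxx _)) sa sb expr1n half.
move=> SC SC'; have key : purity S a * purity S b <= 1 - eps ^+ 2.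
  case/orP: (cuts_or_cutsC S0 ST SC SC') => cut.
    apply: le_trans (purity_le_far cut sa fa).
    exact: ler_piMr (purity_ge0 _ _) (purity_le1 _ sb).
  rewrite mulrC; apply: le_trans (purity_le_far cut sb fb).
  exact: ler_piMr (purity_ge0 _ _) (purity_le1 _ sa).
rewrite (_ : 1 - eps ^+ 2 / 2 = 2^-1 * (1 + (1 - eps ^+ 2))); last by field.
by apply: ler_wpM2l; [rewrite invr_ge0 ler0n | rewrite lerD2l].
Qed.
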